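(* Consider problem (P) and suppose $\bar x\in S$ is a weak local minimizer for (P). Then $F^{(1)}_-(\bar x;u)\ge 0$ for all $u\in\mathbb{R}^s$ (so $0\in\partial^{(1)}_- F(\bar x)$), and $F^{(2)}_-(\bar x;0;u)\ge 0$ for all $u\in\mathbb{R}^s$.
   Context: Problem (P): $C$-minimize $f(x)$ subject to $g(x)\in -K$, where $X\subset\mathbb{R}^s$ is open, $f:X\to\mathbb{R}^n$, $g:X\to\mathbb{R}^m$, and $C\subset\mathbb{R}^n$, $K\subset\mathbb{R}^m$ are closed convex cones with vertex at the origin; $C$ has nonempty interior and $C\ne\mathbb{R}^n$. Feasible set $S=\{x\in X: g(x)\in -K\}$. Positive polar of a cone $D$: $D^*=\{\lambda:\lambda\cdot y\ge 0\ \forall y\in D\}$. A feasible $\bar x$ is a weak local minimizer iff some neighborhood $N$ of $\bar x$ contains no $x\in S$ with $f(x)\in f(\bar x)-\operatorname{int}(C)$. $\Lambda=\{(\lambda,\mu): \lambda\in C^*,\ \mu\in K^*,\ \sum\lambda_i^2+\sum\mu_j^2=1\}$, $F(x)=\max\{\lambda\cdot[f(x)-f(\bar x)]+\mu\cdot g(x):(\lambda,\mu)\in\Lambda\}$. For $F$ at $\bar x$: $F^{(1)}_-(\bar x;u)=\liminf_{t\downarrow 0,\,u'\to u}t^{-1}[F(\bar x+tu')-F(\bar x)]$; $\partial^{(1)}_- F(\bar x)=\{x^*\text{ linear}: x^*(u)\le F^{(1)}_-(\bar x;u)\ \forall u\}$; and when $0\in\partial^{(1)}_-F(\bar x)$,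 $F^{(2)}_-(\bar x;0;u)=\liminf_{t\downarrow 0,\,u'\to u}2t^{-2}[F(\bar x+tu')-F(\bar x)]$. *)

From Stdlib Require Fin.
From Stdlib Require Import Reals Lra.
Open Scope R_scope.

Definition vec (n : nat) : Type := Fin.t n -> R.

Fixpoint vsum (n : nat) : (Fin.t n -> R) -> R :=
  match n with
  | O => fun _ => 0
  | S k => fun h => h Fin.F1 + vsum k (fun i => h (Fin.FS i))
  end.

Definition dot {n : nat} (x y : vec n) : R := vsum n (fun i => x i * y i).
Definition vadd {n : nat} (x y : vec n) : vec n := fun i => x i + y i.
Definition vsub {n : nat} (x y : vec n) : vec n := fun i => x i - y i.
Definition vopp {n : nat} (x : vec n) : vec n := fun i => - x i.
Definition vscal {n : nat} (a : R) (x : vec n) : vec n := fun i => a * x i.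
Definition vzero {n : nat} : vec n := fun _ => 0.
Definition vnorm {n : nat} (x : vec n) : R := sqrt (dot x x).

Definition is_open {n : nat} (X : vec n -> Prop) : Prop :=
  forall x, X x -> exists e, 0 < e /\ forall y, vnorm (vsub y x) < e -> X y.
Definition is_closed {n : nat} (C : vec n -> Prop) : Prop :=
  forall x, (forall e, 0 < e -> exists y, C y /\ vnorm (vsub y x) < e) -> C x.
Definition vinterior {n : nat} (C : vec n -> Prop) (x : vec n) : Prop :=
  exists e, 0 < e /\ forall y, vnorm (vsub y x) < e -> C y.

Definition is_closed_convex_cone {n : nat} (C : vec n -> Prop) : Prop :=
  is_closed C /\ C vzero /\
  (forall a x, 0 <= a -> C x -> C (vscal a x)) /\
  (forall x y, C x -> C y -> C (vadd x y)).

Definition polar {n : nat} (D : vec n -> Prop) (l : vec n) : Prop :=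
  forall y, D y -> dot l y >= 0.

Definition feasible {s m : nat} (X : vec s -> Prop) (g : vec s -> vec m)
  (K : vec m -> Prop) (x : vec s) : Prop := X x /\ K (vopp (g x)).

Definition weak_local_min {s n m : nat} (X : vec s -> Prop) (f : vec s -> vec n)
  (g : vec s -> vec m) (C : vec n -> Prop) (K : vec m -> Prop) (xbar : vec s) : Prop :=
  feasible X g K xbar /\
  exists d, 0 < d /\ forall x, vnorm (vsub x xbar) < d -> feasible X g K x ->
    ~ vinterior C (vsub (f xbar) (f x)).

Definition Lambda {n m : nat} (C : vec n -> Prop) (K : vec m -> Prop)
  (l : vec n) (mu : vec m) : Prop :=
  polar C l /\ polar K mu /\ dot l l + dot mu mu = 1.

Definition is_max (P : R -> Prop) (v : R) : Prop :=
  P v /\ forall w, P w -> w <= v.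

Definition is_F {s n m : nat} (X : vec s -> Prop) (f : vec s -> vec n)
  (g : vec s -> vec m) (C : vec n -> Prop) (K : vec m -> Prop) (xbar : vec s)
  (F : vec s -> R) : Prop :=
  forall x, X x ->
    is_max (fun r => exists l mu, Lambda C K l mu /\
                      r = dot l (vsub (f x) (f xbar)) + dot mu (g x)) (F x).

(** liminf_{t -> 0+, u' -> u} q t u' >= c  (liminf in the extended reals). *)
Definition liminf_ge {s : nat} (q : R -> vec s -> R) (u : vec s) (c : R) : Prop :=
  forall e, 0 < e -> exists d, 0 < d /\
    forall t u', 0 < t < d -> vnorm (vsub u' u) < d -> q t u' > c - e.

Definition dini1_quot {s : nat} (F : vec s -> R) (xbar : vec s) (t : R) (u' : vec s) : R :=
  (F (vadd xbar (vscal t u')) - F xbar) / t.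
Definition dini2_quot {s : nat} (F : vec s -> R) (xbar : vec s) (t : R) (u' : vec s) : R :=
  2 * (F (vadd xbar (vscal t u')) - F xbar) / (t * t).

Definition dini1_ge {s : nat} (F : vec s -> R) (xbar u : vec s) (c : R) : Prop :=
  liminf_ge (dini1_quot F xbar) u c.
Definition dini2_ge {s : nat} (F : vec s -> R) (xbar u : vec s) (c : R) : Prop :=
  liminf_ge (dini2_quot F xbar) u c.

Definition is_linear {s : nat} (L : vec s -> R) : Prop :=
  (forall u v, L (vadd u v) = L u + L v) /\ (forall a u, L (vscal a u) = a * L u).

Definition in_lower_subdiff1 {s : nat} (F : vec s -> R) (xbar : vec s) (L : vec s -> R) : Prop :=
  is_linear L /\ forall u, dini1_ge F xbar u (L u).

From Stdlib Require Import Reals Lra Classical IndefiniteDescription FunctionalExtensionality.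
Open Scope R_scope.

(* Near a weak local minimizer xbar the max-function F is nonnegative, while F(xbar) <= 0.
   At a feasible x, f(xbar) - f(x) lies outside int C, and a unit l in C^* with
   l.(f(xbar) - f(x)) <= 0 makes the pair (l, 0) of Lambda witness F(x) >= 0; at an
   infeasible x, -g(x) lies outside K, and a unit mu in K^* with mu.g(x) > 0 makes (0, mu)
   witness F(x) > 0.  Both multipliers come from separating a point from a convex cone,
   done by projecting the point onto the closure of the cone (a minimizing sequence is
   Cauchy by the parallelogram law).  So xbar is a local minimizer of F, and every lower
   Dini quotient of F at xbar is eventually nonnegative. *)

Definition is_convex_cone {n : nat} (D : vec n -> Prop) : Prop :=
  D vzero /\ (forall a x, 0 <= a -> D x -> D (vscal a x)) /\
  (forall x y, D x -> D y -> D (vadd x y)).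

Definition dist2 {n : nat} (x y : vec n) : R := dot (vsub x y) (vsub x y).

Lemma vsum_ext n (h1 h2 : Fin.t n -> R) : (forall i, h1 i = h2 i) -> vsum n h1 = vsum n h2.
Proof.
  induction n as [|n IH]; simpl; intros H; [reflexivity|].
  rewrite H. f_equal. apply IH. intro; apply H.
Qed.

Lemma vsum_le n (h1 h2 : Fin.t n -> R) : (forall i, h1 i <= h2 i) -> vsum n h1 <= vsum n h2.
Proof.
  induction n as [|n IH]; simpl; intros H; [lra|].
  pose proof (IH (fun i => h1 (Fin.FS i)) (fun i => h2 (Fin.FS i)) (fun i => H _)).
  pose proof (H Fin.F1). lra.
Qed.

Lemma vsum_lin3 n a b c (h1 h2 h3 : Fin.t n -> R) :
  vsum n (fun i => a * h1 i + b * h2 i + c * h3 i) = a * vsum n h1 + b * vsum n h2 + c * vsum n h3.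
Proof.
  induction n as [|n IH]; simpl; [ring|].
  rewrite (IH (fun i => h1 (Fin.FS i)) (fun i => h2 (Fin.FS i)) (fun i => h3 (Fin.FS i))). ring.
Qed.

Lemma vsum_zero n : vsum n (fun _ => 0) = 0.
Proof. induction n as [|n IH]; simpl; [reflexivity|]. rewrite IH; ring. Qed.

Lemma vsum_nonneg n (h : Fin.t n -> R) : (forall i, 0 <= h i) -> 0 <= vsum n h.
Proof. intro H. rewrite <- (vsum_zero n). now apply vsum_le. Qed.

Lemma vsum_term_le n (h : Fin.t n -> R) : (forall i, 0 <= h i) -> forall j, h j <= vsum n h.
Proof.
  induction n as [|n IH]; intros H j; [inversion j|].
  pose proof (H Fin.F1).
  pose proof (vsum_nonneg n (fun i => h (Fin.FS i)) (fun i => H _)).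
  simpl. apply (Fin.caseS' j); [lra|].
  intro k. pose proof (IH (fun i => h (Fin.FS i)) (fun i => H _) k). lra.
Qed.

Lemma vsum_cv n (hk : nat -> Fin.t n -> R) (h : Fin.t n -> R) :
  (forall i, Un_cv (fun k => hk k i) (h i)) -> Un_cv (fun k => vsum n (hk k)) (vsum n h).
Proof.
  induction n as [|n IH]; intros Hc; simpl.
  - intros e He. exists 0%nat. intros. unfold Rdist. rewrite Rminus_diag, Rabs_R0. lra.
  - apply CV_plus; [apply Hc|].
    apply (IH (fun k i => hk k (Fin.FS i)) (fun i => h (Fin.FS i))). intro; apply Hc.
Qed.

(* Closes coordinatewise identities between a single [dot] and either a single [dot] or a
   combination [a * dot _ _ + b * dot _ _ + c * dot _ _]. *)
Ltac dot_ring :=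
  unfold dist2, dot; rewrite <- ?vsum_lin3; apply vsum_ext; intro;
  unfold vsub, vadd, vscal, vopp, vzero; field.

Lemma dot_nonneg n (v : vec n) : 0 <= dot v v.
Proof. apply vsum_nonneg. intro; nra. Qed.

Lemma sq_coord_le_dot n (v : vec n) i : v i * v i <= dot v v.
Proof. apply (vsum_term_le n (fun i => v i * v i)). intro; nra. Qed.

Lemma dot_add_le n (a b : vec n) : dot (vadd a b) (vadd a b) <= 2 * dot a a + 2 * dot b b.
Proof.
  replace (2 * dot a a + 2 * dot b b) with (2 * dot a a + 2 * dot b b + 0 * dot a a) by ring.
  unfold dot. rewrite <- vsum_lin3. apply vsum_le. intro i. unfold vadd.
  pose proof (Rle_0_sqr (a i - b i)). unfold Rsqr in *. lra.
Qed.

Lemma dot_scal_l n k (a b : vec n) : dot (vscal k a) b = k * dot a b.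
Proof. replace (k * dot a b) with (k * dot a b + 0 * dot a b + 0 * dot a b) by ring. dot_ring. Qed.

Lemma dot_scal2 n k (a : vec n) : dot (vscal k a) (vscal k a) = k * k * dot a a.
Proof. replace (k * k * dot a a) with (k * k * dot a a + 0 * dot a a + 0 * dot a a) by ring. dot_ring. Qed.

Lemma dot_zero_l n (v : vec n) : dot vzero v = 0.
Proof. replace 0 with (0 * dot v v + 0 * dot v v + 0 * dot v v) by ring. dot_ring. Qed.

Lemma polar_zero n (D : vec n -> Prop) : polar D vzero.
Proof. intros y _. rewrite dot_zero_l. lra. Qed.

Lemma vnorm_lt n (v : vec n) e : 0 < e -> (vnorm v < e <-> dot v v < e * e).
Proof.
  intro He. unfold vnorm. pose proof (dot_nonneg n v) as Hv. split; intro H.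
  - pose proof (sqrt_sqrt _ Hv). pose proof (sqrt_pos (dot v v)). nra.
  - rewrite <- (sqrt_square e) by lra. apply sqrt_lt_1_alt. lra.
Qed.

Lemma dist2_sym n (x y : vec n) : dist2 x y = dist2 y x.
Proof. replace (dist2 y x) with (1 * dist2 y x + 0 * dist2 y x + 0 * dist2 y x) by ring. dot_ring. Qed.

Lemma dot_cv n (u : nat -> vec n) (v : vec n) :
  (forall i, Un_cv (fun k => u k i) (v i)) -> Un_cv (fun k => dot (u k) (u k)) (dot v v).
Proof. intro Hu. apply (vsum_cv n (fun k i => u k i * u k i)). intro i. now apply CV_mult. Qed.

Lemma unit_rescale n (mu : vec n) :
  0 < dot mu mu -> exists k, 0 < k /\ dot (vscal k mu) (vscal k mu) = 1.
Proof.
  intro H. pose proof (sqrt_lt_R0 _ H). exists (/ sqrt (dot mu mu)).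
  split; [now apply Rinv_0_lt_compat|].
  rewrite dot_scal2. rewrite <- (sqrt_sqrt (dot mu mu)) at 3 by lra. field. lra.
Qed.

Lemma cv_const (c : R) : Un_cv (fun _ => c) c.
Proof. intros e He. exists 0%nat. intros. unfold Rdist. rewrite Rminus_diag, Rabs_R0. lra. Qed.

Lemma cv_inv_succ : Un_cv (fun k => / (INR k + 1)) 0.
Proof.
  apply (cv_infty_cv_0 (fun k => INR k + 1)). intro M.
  destruct (INR_archimed 1 M) as [N HN]; [lra|].
  exists N. intros k Hk. apply le_INR in Hk. lra.
Qed.

Lemma inv_succ_pos k : 0 < / (INR k + 1).
Proof. apply Rinv_0_lt_compat. pose proof (pos_INR k). lra. Qed.

Lemma cauchy_of_sq_bound (a b : nat -> R) :
  Un_cv b 0 -> (forall k j, (a k - a j) * (a k - a j) <= b k + b j) -> Cauchy_crit a.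
Proof.
  intros Hb Hab eps Heps.
  destruct (Hb (eps * eps / 2)) as [N HN]; [nra|].
  exists N. intros k j Hk Hj. unfold Rdist.
  specialize (HN k Hk) as Hbk. specialize (HN j Hj) as Hbj. specialize (Hab k j).
  unfold Rdist in Hbk, Hbj. rewrite Rminus_0_r in Hbk, Hbj.
  apply Rabs_def2 in Hbk. apply Rabs_def2 in Hbj.
  apply Rabs_def1; nra.
Qed.

Lemma inf_approx (P : R -> Prop) (r : R) :
  (exists x, P x) -> (forall x, P x -> r <= x) ->
  exists delta, r <= delta /\ (forall x, P x -> delta <= x) /\
    forall eps, 0 < eps -> exists x, P x /\ x < delta + eps.
Proof.
  intros Hne Hlb.
  destruct (completeness (fun y => P (- y))) as [M [HM1 HM2]].
  - exists (- r). intros y Hy. specialize (Hlb _ Hy). lra.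
  - destruct Hne as [x Hx]. exists (- x). now rewrite Ropp_involutive.
  - exists (- M). split; [|split].
    + assert (M <= - r); [|lra].
      apply HM2. intros y Hy. specialize (Hlb _ Hy). lra.
    + intros x Hx. assert (- x <= M); [|lra].
      apply HM1. now rewrite Ropp_involutive.
    + intros eps Heps. apply NNPP. intro Hno.
      assert (M <= M - eps); [|lra].
      apply HM2. intros y Hy. apply Rnot_lt_le. intro Hlt.
      apply Hno. exists (- y). split; [exact Hy|lra].
Qed.

Lemma nonneg_of_quadratic_nonneg b c :
  0 <= c -> (forall t, 0 < t <= 1 -> 0 <= t * b + t * t * c) -> 0 <= b.
Proof.
  intros Hc H. destruct (Rle_lt_dec 0 b) as [|Hb]; [assumption|].
  set (t := Rmin 1 (- b / (c + 1))).
  assert (Ht0 : 0 < t) by (apply Rmin_glb_lt; [lra|apply Rdiv_lt_0_compat; lra]).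
  assert (Htc : t * (c + 1) <= - b).
  { replace (- b) with (- b / (c + 1) * (c + 1)) by (field; lra).
    apply Rmult_le_compat_r; [lra|apply Rmin_r]. }
  specialize (H t (conj Ht0 (Rmin_l _ _))). nra.
Qed.

Section MinimizingSequence.

Variables (n : nat) (D : vec n -> Prop) (p : vec n) (delta : R) (y : nat -> vec n) (z : vec n).
Hypothesis D0 : D vzero.
Hypothesis Dscal : forall a x, 0 <= a -> D x -> D (vscal a x).
Hypothesis Dadd : forall x x', D x -> D x' -> D (vadd x x').
Hypothesis delta_lb : forall w, D w -> delta <= dist2 p w.
Hypothesis y_in : forall k, D (y k).
Hypothesis y_min : forall k, dist2 p (y k) < delta + / (INR k + 1).
Hypothesis y_cv : forall i, Un_cv (fun k => y k i) (z i).

(* Parallelogram law around the midpoint of [y k] and [y j], which lies in [D]. *)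
Lemma minseq_dist2 k j : dist2 (y k) (y j) <= 2 * / (INR k + 1) + 2 * / (INR j + 1).
Proof.
  set (mid := vscal (/ 2) (vadd (y k) (y j))).
  assert (Hmid : delta <= dist2 p mid) by (apply delta_lb, Dscal, Dadd; auto; lra).
  assert (Hpar : dist2 (y k) (y j) = 2 * dist2 p (y k) + 2 * dist2 p (y j) + (-4) * dist2 p mid)
    by (unfold mid; dot_ring).
  pose proof (y_min k). pose proof (y_min j). lra.
Qed.

Lemma minseq_cauchy i : Cauchy_crit (fun k => y k i).
Proof.
  apply (cauchy_of_sq_bound _ (fun k => 2 * / (INR k + 1))).
  - rewrite <- (Rmult_0_r 2). apply CV_mult; [apply cv_const|apply cv_inv_succ].
  - intros k j. eapply Rle_trans; [|apply minseq_dist2].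
    apply (sq_coord_le_dot n (vsub (y k) (y j)) i).
Qed.

Lemma minseq_limit_far a w : 0 <= a -> D w -> delta <= dist2 p (vadd (vscal a z) w).
Proof.
  intros Ha Hw.
  apply (Rle_cv_lim (Un := fun _ => delta) (Vn := fun k => dist2 p (vadd (vscal a (y k)) w))).
  - intro k. apply delta_lb, Dadd; auto.
  - apply cv_const.
  - apply dot_cv. intro i. unfold vsub, vadd, vscal.
    apply CV_minus; [apply cv_const|]. apply CV_plus; [|apply cv_const].
    apply CV_mult; [apply cv_const|apply y_cv].
Qed.

Lemma minseq_limit_dist : dist2 p z = delta.
Proof.
  apply Rle_antisym.
  - apply (Rle_cv_lim (Un := fun k => dist2 p (y k)) (Vn := fun k => delta + / (INR k + 1))).
    + intro k. left. apply y_min.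
    + apply dot_cv. intro i. apply CV_minus; [apply cv_const|apply y_cv].
    + rewrite <- (Rplus_0_r delta) at 1. apply CV_plus; [apply cv_const|apply cv_inv_succ].
  - replace (dist2 p z) with (dist2 p (vadd (vscal 1 z) vzero)) by dot_ring.
    apply minseq_limit_far; [lra|assumption].
Qed.

(* [z] is the projection of [p] onto the closure of [D]; these are its first-order
   optimality conditions. *)
Lemma minseq_limit_normal :
  (forall w, D w -> 0 <= dot (vsub z p) w) /\ dot (vsub z p) z <= 0.
Proof.
  set (mu := vsub z p).
  assert (Hmu : dot mu mu = delta) by (rewrite <- minseq_limit_dist; unfold mu; dot_ring).
  split.
  - intros w Hw.
    enough (0 <= 2 * dot mu w) by lra.
    apply (nonneg_of_quadratic_nonneg _ (dot w w)); [apply dot_nonneg|].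
    intros t Ht.
    pose proof (minseq_limit_far 1 (vscal t w) ltac:(lra) (Dscal t w ltac:(lra) Hw)) as Hfar.
    replace (dist2 p (vadd (vscal 1 z) (vscal t w)))
      with (1 * dot mu mu + (2 * t) * dot mu w + (t * t) * dot w w) in Hfar by (unfold mu; dot_ring).
    lra.
  - enough (0 <= -2 * dot mu z) by lra.
    apply (nonneg_of_quadratic_nonneg _ (dot z z)); [apply dot_nonneg|].
    intros t Ht.
    pose proof (minseq_limit_far (1 - t) vzero ltac:(lra) D0) as Hfar.
    replace (dist2 p (vadd (vscal (1 - t) z) vzero))
      with (1 * dot mu mu + (-2 * t) * dot mu z + (t * t) * dot z z) in Hfar by (unfold mu; dot_ring).
    lra.
Qed.

End MinimizingSequence.

(* The separating direction is [z - p], where the projection [z] of [p] onto the closure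
   of [D] is the limit of a minimizing sequence. *)
Lemma cone_separation n (D : vec n -> Prop) (p : vec n) (r : R) :
  is_convex_cone D -> 0 < r -> (forall y, D y -> r <= dist2 p y) ->
  exists mu, polar D mu /\ dot mu mu = 1 /\ dot mu p < 0.
Proof.
  intros [D0 [Dscal Dadd]] Hr Hfar.
  destruct (inf_approx (fun x => exists w, D w /\ x = dist2 p w) r)
    as [delta [Hr_delta [Hlb Happrox]]].
  { exists (dist2 p vzero). now exists vzero. }
  { intros x [w [Hw ->]]. now apply Hfar. }
  assert (delta_lb : forall w, D w -> delta <= dist2 p w) by (intros w Hw; apply Hlb; now exists w).
  assert (Hseq : forall k : nat, exists w, D w /\ dist2 p w < delta + / (INR k + 1)).
  { intro k. destruct (Happrox _ (inv_succ_pos k)) as [x [[w [Hw ->]] Hx]]. now exists w. }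
  destruct (functional_choice _ Hseq) as [y Hy].
  assert (y_in : forall k, D (y k)) by (intro k; apply Hy).
  assert (y_min : forall k, dist2 p (y k) < delta + / (INR k + 1)) by (intro k; apply Hy).
  assert (Hlim : forall i, exists l, Un_cv (fun k => y k i) l).
  { intro i. destruct (R_complete _ (minseq_cauchy n D p delta y Dscal Dadd delta_lb y_in y_min i))
      as [l Hl]. now exists l. }
  destruct (functional_choice _ Hlim) as [z y_cv].
  pose proof (minseq_limit_dist n D p delta y z D0 Dscal Dadd delta_lb y_in y_min y_cv) as Hdist.
  destruct (minseq_limit_normal n D p delta y z D0 Dscal Dadd delta_lb y_in y_min y_cv)
    as [Hpolar Hz_angle].
  set (mu := vsub z p) in *.
  assert (Hmu : dot mu mu = delta) by (rewrite <- Hdist; unfold mu; dot_ring).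
  assert (Hmu_p : dot mu p = 1 * dot mu z + (-1) * dot mu mu + 0 * dot mu mu) by (unfold mu; dot_ring).
  destruct (unit_rescale n mu ltac:(lra)) as [k [Hk Hunit]].
  exists (vscal k mu). split; [|split; [exact Hunit|]].
  - intros w Hw. rewrite dot_scal_l. specialize (Hpolar w Hw). apply Rle_ge. nra.
  - rewrite dot_scal_l. nra.
Qed.

Lemma closed_cone_separation n (K : vec n -> Prop) (p : vec n) :
  is_closed_convex_cone K -> ~ K p -> exists mu, polar K mu /\ dot mu mu = 1 /\ dot mu p < 0.
Proof.
  intros [Kclosed HK] Hp.
  assert (Hgap : exists e, 0 < e /\ forall y, K y -> e * e <= dist2 p y).
  { apply NNPP. intro Hno. apply Hp, Kclosed. intros e He.
    apply NNPP. intro Hfar. apply Hno. exists e. split; [exact He|].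
    intros y Ky. apply Rnot_lt_le. intro Hlt. apply Hfar. exists y. split; [exact Ky|].
    apply vnorm_lt; [exact He|]. now rewrite <- dist2_sym in Hlt. }
  destruct Hgap as [e [He Hfar]].
  apply (cone_separation n K p (e * e)); auto. nra.
Qed.

Lemma cone_ball_interior n (C : vec n -> Prop) (x : vec n) (e s : R) :
  (forall a v, 0 <= a -> C v -> C (vscal a v)) -> 0 < e -> 0 < s ->
  (forall b, dot b b < e * e -> C (vadd (vscal s x) b)) -> vinterior C x.
Proof.
  intros Cscal He Hs Hball. exists (e / s). split; [now apply Rdiv_lt_0_compat|].
  intros w Hw. apply vnorm_lt in Hw; [|now apply Rdiv_lt_0_compat].
  replace w with (vscal (/ s) (vadd (vscal s x) (vscal s (vsub w x)))).
  2:{ apply functional_extensionality. intro. unfold vscal, vadd, vsub. field. lra. }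
  apply Cscal; [left; now apply Rinv_0_lt_compat|]. apply Hball.
  rewrite dot_scal2.
  replace (e * e) with (s * s * (e / s * (e / s))) by (field; lra).
  apply Rmult_lt_compat_l; [nra|exact Hw].
Qed.

Lemma cone_ball_full n (C : vec n -> Prop) (e : R) :
  (forall a v, 0 <= a -> C v -> C (vscal a v)) -> 0 < e ->
  (forall b, dot b b < e * e -> C b) -> forall v, C v.
Proof.
  intros Cscal He Hball v.
  set (k := e / (2 * (dot v v + 1))).
  pose proof (dot_nonneg n v).
  assert (Hk : 0 < k) by (apply Rdiv_lt_0_compat; lra).
  replace v with (vscal (/ k) (vscal k v)).
  2:{ apply functional_extensionality. intro. unfold vscal. field. lra. }
  apply Cscal; [left; now apply Rinv_0_lt_compat|]. apply Hball.
  rewrite dot_scal2.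
  assert (Hkk : k * k * ((dot v v + 1) * (dot v v + 1)) = e * e / 4) by (unfold k; field; lra).
  assert (0 < k * k) by nra. nra.
Qed.

(* [q] is separated from the interior of [C] through the cone [C - R+ q], which stays at
   distance [rho / 2] from [-c] when the ball of radius [rho] about [c] lies in [C];
   otherwise [C] would contain a ball about [s q] for some [s >= 0]. *)
Lemma interior_cone_separation n (C : vec n -> Prop) (c q : vec n) :
  is_convex_cone C -> vinterior C c -> (exists y, ~ C y) -> ~ vinterior C q ->
  exists l, polar C l /\ dot l l = 1 /\ dot l q <= 0.
Proof.
  intros [C0 [Cscal Cadd]] [rho [Hrho Hc]] [y0 Hy0] Hq.
  set (e := rho / 2).
  assert (He : 0 < e) by (unfold e; lra).
  assert (Hsmall : forall a b, dot a a < e * e -> dot b b < e * e -> C (vadd c (vadd a b))).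
  { intros a b Ha Hb. apply Hc, vnorm_lt; [lra|].
    replace (dot (vsub (vadd c (vadd a b)) c) (vsub (vadd c (vadd a b)) c))
      with (dot (vadd a b) (vadd a b)) by dot_ring.
    pose proof (dot_add_le n a b). unfold e in *. nra. }
  set (D := fun v => exists y s, C y /\ 0 <= s /\ v = vsub y (vscal s q)).
  assert (HD : is_convex_cone D).
  { split; [|split].
    - exists vzero, 0. repeat split; auto; [lra|].
      apply functional_extensionality. intro. unfold vsub, vscal, vzero. ring.
    - intros a v Ha [y [s [Cy [Hs ->]]]]. exists (vscal a y), (a * s).
      repeat split; auto; [nra|].
      apply functional_extensionality. intro. unfold vsub, vscal. ring.
    - intros v w [y [s [Cy [Hs ->]]]] [y' [s' [Cy' [Hs' ->]]]].
      exists (vadd y y'), (s + s'). repeat split; auto; [lra|].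
      apply functional_extensionality. intro. unfold vsub, vscal, vadd. ring. }
  assert (Hfar : forall v, D v -> e * e <= dist2 (vopp c) v).
  { intros v [y [s [Cy [Hs ->]]]]. apply Rnot_lt_le. intro Hlt.
    set (w := vsub (vsub y (vscal s q)) (vopp c)).
    assert (Hw : dot w w < e * e) by (rewrite dist2_sym in Hlt; exact Hlt).
    assert (Hball : forall b, dot b b < e * e -> C (vadd (vscal s q) b)).
    { intros b Hb. replace (vadd (vscal s q) b) with (vadd y (vadd c (vadd (vopp w) b))).
      2:{ apply functional_extensionality. intro. unfold w, vadd, vopp, vsub, vscal. ring. }
      apply Cadd; [exact Cy|]. apply Hsmall; [|exact Hb].
      replace (dot (vopp w) (vopp w)) with (dot w w) by dot_ring. exact Hw. }
    destruct (Rle_lt_or_eq_dec 0 s Hs) as [Hs0|Hs0].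
    - exact (Hq (cone_ball_interior n C q e s Cscal He Hs0 Hball)).
    - apply Hy0. apply (cone_ball_full n C e Cscal He). intros b Hb.
      replace b with (vadd (vscal s q) b) by (apply functional_extensionality; intro;
        unfold vadd, vscal; rewrite <- Hs0; ring).
      now apply Hball. }
  destruct (cone_separation n D (vopp c) (e * e) HD ltac:(nra) Hfar) as [l [Hl [Hunit _]]].
  exists l. split; [|split; [exact Hunit|]].
  - intros y Cy. apply Hl. exists y, 0. repeat split; auto; [lra|].
    apply functional_extensionality. intro. unfold vsub, vscal. ring.
  - assert (Hmq : D (vopp q)).
    { exists vzero, 1. repeat split; auto; [lra|].
      apply functional_extensionality. intro. unfold vsub, vscal, vzero, vopp. ring. }
    specialize (Hl _ Hmq).
    replace (dot l (vopp q)) with ((-1) * dot l q + 0 * dot l q + 0 * dot l q) in Hl by dot_ring.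
    lra.
Qed.

Lemma is_F_nonneg s n m (X : vec s -> Prop) (f : vec s -> vec n) (g : vec s -> vec m)
  (C : vec n -> Prop) (K : vec m -> Prop) (xbar : vec s) (F : vec s -> R) (c : vec n) (x : vec s) :
  is_closed_convex_cone C -> is_closed_convex_cone K -> vinterior C c -> (exists y, ~ C y) ->
  is_F X f g C K xbar F -> X x ->
  (K (vopp (g x)) -> ~ vinterior C (vsub (f xbar) (f x))) -> 0 <= F x.
Proof.
  intros HC HK Hc HCproper HF Hx Hnot_better.
  destruct (HF x Hx) as [_ Hmax].
  destruct (classic (K (vopp (g x)))) as [Kx|Kx].
  - destruct (interior_cone_separation n C c (vsub (f xbar) (f x)) (proj2 HC) Hc HCproper
                (Hnot_better Kx)) as [l [Hl [Hunit Hlq]]].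
    enough (Hval : - dot l (vsub (f xbar) (f x)) <= F x) by lra.
    apply Hmax. exists l, vzero. split.
    + split; [exact Hl|split; [apply polar_zero|]]. rewrite dot_zero_l. lra.
    + rewrite dot_zero_l.
      replace (dot l (vsub (f x) (f xbar)))
        with ((-1) * dot l (vsub (f xbar) (f x)) + 0 * dot l l + 0 * dot l l) by dot_ring.
      ring.
  - destruct (closed_cone_separation m K (vopp (g x)) HK Kx) as [mu [Hmu [Hunit Hmug]]].
    enough (Hval : - dot mu (vopp (g x)) <= F x) by lra.
    apply Hmax. exists vzero, mu. split.
    + split; [apply polar_zero|split; [exact Hmu|]]. rewrite dot_zero_l. lra.
    + rewrite dot_zero_l.
      replace (dot mu (g x)) with ((-1) * dot mu (vopp (g x)) + 0 * dot mu mu + 0 * dot mu mu)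
        by dot_ring.
      ring.
Qed.

Lemma is_F_nonpos_at_feasible s n m (X : vec s -> Prop) (f : vec s -> vec n)
  (g : vec s -> vec m) (C : vec n -> Prop) (K : vec m -> Prop) (xbar : vec s) (F : vec s -> R) :
  is_F X f g C K xbar F -> feasible X g K xbar -> F xbar <= 0.
Proof.
  intros HF [Xxbar Kxbar].
  destruct (HF xbar Xxbar) as [[l [mu [[_ [Hmu _]] ->]]] _].
  specialize (Hmu _ Kxbar).
  replace (dot mu (vopp (g xbar))) with ((-1) * dot mu (g xbar) + 0 * dot mu mu + 0 * dot mu mu)
    in Hmu by dot_ring.
  replace (dot l (vsub (f xbar) (f xbar))) with (0 * dot l l + 0 * dot l l + 0 * dot l l) by dot_ring.
  lra.
Qed.

Lemma ball_contains_directions s (xbar u : vec s) (rho : R) : 0 < rho ->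
  exists del, 0 < del /\ forall t u', 0 < t < del -> vnorm (vsub u' u) < del ->
    vnorm (vsub (vadd xbar (vscal t u')) xbar) < rho.
Proof.
  intro Hrho. set (U := dot u u). pose proof (dot_nonneg s u) as HU. fold U in HU.
  set (del := Rmin 1 (rho / (2 + 2 * U))).
  assert (Hdel_rho : del * (2 + 2 * U) <= rho).
  { assert (Hmin : del <= rho / (2 + 2 * U)) by apply Rmin_r.
    apply (Rmult_le_compat_r (2 + 2 * U)) in Hmin; [|lra].
    replace (rho / (2 + 2 * U) * (2 + 2 * U)) with rho in Hmin by (field; lra).
    exact Hmin. }
  assert (Hdel1 : del <= 1) by apply Rmin_l.
  assert (Hdel : 0 < del) by (apply Rmin_glb_lt; [lra|apply Rdiv_lt_0_compat; lra]).
  exists del. split; [exact Hdel|]. intros t u' Ht Hu'.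
  apply vnorm_lt in Hu'; [|exact Hdel].
  apply vnorm_lt; [exact Hrho|].
  replace (vsub (vadd xbar (vscal t u')) xbar) with (vscal t u').
  2:{ apply functional_extensionality. intro. unfold vsub, vadd, vscal. ring. }
  rewrite dot_scal2.
  assert (Hu'2 : dot u' u' < 2 + 2 * U).
  { pose proof (dot_add_le s (vsub u' u) u) as Htri.
    replace (dot (vadd (vsub u' u) u) (vadd (vsub u' u) u)) with (dot u' u') in Htri by dot_ring.
    fold U in Htri. nra. }
  assert (t * t * dot u' u' <= del * del * (2 + 2 * U)).
  { pose proof (dot_nonneg s u'). apply Rmult_le_compat; nra. }
  assert (del * del * (2 + 2 * U) <= del * rho) by nra.
  assert (del * rho < rho * rho) by nra.
  lra.
Qed.

Lemma liminf_ge_0_of_eventually_nonneg s (q : R -> vec s -> R) (u : vec s) :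
  (exists del, 0 < del /\ forall t u', 0 < t < del -> vnorm (vsub u' u) < del -> 0 <= q t u') ->
  liminf_ge q u 0.
Proof.
  intros [del [Hdel Hq]] e He. exists del. split; [exact Hdel|].
  intros t u' Ht Hu'. specialize (Hq t u' Ht Hu'). lra.
Qed.

Lemma local_min_dini_nonneg s (F : vec s -> R) (xbar : vec s) (rho : R) :
  0 < rho -> (forall x, vnorm (vsub x xbar) < rho -> F xbar <= F x) ->
  forall u, dini1_ge F xbar u 0 /\ dini2_ge F xbar u 0.
Proof.
  intros Hrho Hmin u.
  destruct (ball_contains_directions s xbar u rho Hrho) as [del [Hdel Hball]].
  assert (Hincr : forall t u', 0 < t < del -> vnorm (vsub u' u) < del ->
                    0 <= F (vadd xbar (vscal t u')) - F xbar).
  { intros t u' Ht Hu'. specialize (Hmin _ (Hball t u' Ht Hu')). lra. }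
  split; apply liminf_ge_0_of_eventually_nonneg; exists del; split; auto;
    intros t u' Ht Hu'; specialize (Hincr t u' Ht Hu'); unfold dini1_quot, dini2_quot.
  - unfold Rdiv. apply Rmult_le_pos; [lra|left; apply Rinv_0_lt_compat; lra].
  - unfold Rdiv. apply Rmult_le_pos; [lra|left; apply Rinv_0_lt_compat; nra].
Qed.

Theorem mainTheorem10 (s n m : nat) (X : vec s -> Prop) (f : vec s -> vec n)
  (g : vec s -> vec m) (C : vec n -> Prop) (K : vec m -> Prop)
  (xbar : vec s) (F : vec s -> R) :
  is_open X ->
  is_closed_convex_cone C -> is_closed_convex_cone K ->
  (exists c : vec n, vinterior C c) -> (exists y : vec n, ~ C y) ->
  is_F X f g C K xbar F ->
  weak_local_min X f g C K xbar ->
  (forall u, dini1_ge F xbar u 0) /\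
  in_lower_subdiff1 F xbar (fun _ => 0) /\
  (forall u, dini2_ge F xbar u 0).
Proof.
  intros HX HC HK [c Hc] HCproper HF [Hfeas [d [Hd Hloc]]].
  destruct (HX xbar (proj1 Hfeas)) as [eX [HeX HXball]].
  set (rho := Rmin eX d).
  assert (Hrho : 0 < rho) by (apply Rmin_glb_lt; lra).
  assert (Hmin : forall x, vnorm (vsub x xbar) < rho -> F xbar <= F x).
  { intros x Hx.
    assert (rho <= eX) by apply Rmin_l. assert (rho <= d) by apply Rmin_r.
    assert (Xx : X x) by (apply HXball; lra).
    pose proof (is_F_nonpos_at_feasible s n m X f g C K xbar F HF Hfeas).
    enough (0 <= F x) by lra.
    apply (is_F_nonneg s n m X f g C K xbar F c x HC HK Hc HCproper HF Xx).
    intro Kx. apply Hloc; [lra|split; assumption]. }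
  pose proof (local_min_dini_nonneg s F xbar rho Hrho Hmin) as Hdini.
  split; [|split; [split|]].
  - intro u. apply Hdini.
  - split; intros; ring.
  - intro u. apply Hdini.
  - intro u. apply Hdini.
Qed.
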